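(* Let $\varsigma=(\varsigma_1,\dots,\varsigma_K)\in\Gamma(\mathscr M_1)\oplus\dots\oplus\Gamma(\mathscr M_K)$. Then $\varsigma\in\pi(C(X))$ if and only if $\varsigma$ has the boundary decomposition property and, for every $k=1,\dots,K$ and every $x\in\overline{Y_k}$, $\varsigma_k(x)$ has a diagonal matrix representation, i.e. $\varsigma_k(x)$ maps $\mathscr V^{(i)}_x$ into itself for each $0\le i\le r_k-1$.
   Context: Let $X$ be an infinite compact metric space, $\alpha:X\to X$ a minimal homeomorphism, $\mathscr V$ a Hermitian complex line bundle over $X$, and $Y\subset X$ closed with non-empty interior. $\mathcal E=\Gamma(\mathscr V,\alpha)$ is the Hilbert $C(X)$-bimodule of continuous sections of $\mathscr V$ with right action $(\xi f)(x)=\xi(x)f(x)$, right inner product $\langle\xi(x),\eta(x)\rangle_{\mathscr V_x}$, left action $f\cdot\xi=\xi\,(f\circ\alpha)$; $\mathcal E_Y=C_0(X\setminus Y)\mathcal E$ and $\mathcal O(\mathcal E_Y)\supseteq C(X)$ is its Cuntz–Pimsner algebra. For $y\in Y$ let $r_Y(y)=\min\{n\ge1:\alpha^n(y)\in Y\}$, with distinct values $r_1<\dots<r_K$, and $Y_k=\{y\in Y:r_Y(y)=r_k\}$. Let $\mathscr V^{(0)}=X\times\mathbb C$, $\mathscr V^{(n)}=(\alpha^{n-1})^*\mathscr V\otimes\cdots\otimes\alpha^*\mathscr V\otimes\mathscr V$, so $\mathscr V^{(n)}_x=\mathscr V_{\alpha^{n-1}(x)}\otimes\cdots\otimes\mathscr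 V_x=\mathscr V^{(n-m)}_{\alpha^m(x)}\otimes\mathscr V^{(m)}_x$. Let $\mathscr D^{(n)}=\mathscr V^{(0)}\oplus\cdots\oplus\mathscr V^{(n-1)}$, $\mathscr M_k=\mathrm{End}(\mathscr D^{(r_k)})|_{\overline{Y_k}}$, $\Gamma(\mathscr M_k)$ its continuous sections. $\pi=\oplus_k\pi_k$ where $\pi_k:\mathcal O(\mathcal E_Y)\to\Gamma(\mathscr M_k)$ is the $*$-homomorphism with $\pi_k(f)(x)(a_0,\dots,a_{r_k-1})=(f(x)a_0,\dots,f(\alpha^{r_k-1}(x))a_{r_k-1})$ for $f\in C(X)$ and $\pi_k(\xi)(x)(a_0,\dots,a_{r_k-1})=(0,\xi(x)\otimes a_0,\dots,\xi(\alpha^{r_k-2}(x))\otimes a_{r_k-2})$ for $\xi\in\mathcal E_Y$, $x\in\overline{Y_k}$. Boundary decomposition property: for every $k$ and $x\in\overline{Y_k}\setminus Y_k$, with $t_1,\dots,t_m<k$ such that $r_{t_1}+\dots+r_{t_m}=r_k$ and $x\in Y_{t_1}\cap\alpha^{-r_{t_1}}(Y_{t_2})\cap\dots\cap\alpha^{-(r_{t_1}+\dots+r_{t_{m-1}})}(Y_{t_m})$, $R_0=0$, $R_s=r_{t_1}+\dots+r_{t_s}$, and the $s$-th component $\mathscr V^{(R_{s-1})}_x\oplus\dots\oplus\mathscr V^{(R_s-1)}_x$ of $\mathscr D^{(r_k)}_x$ identified with $\mathscr D^{(r_{t_s})}_{\alpha^{R_{s-1}}(x)}\otimes\mathscr V^{(R_{s-1})}_x$,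 $\varsigma_k(x)$ restricted to the $s$-th component equals $\varsigma_{t_s}(\alpha^{R_{s-1}}(x))\otimes\mathrm{id}_{\mathscr V^{(R_{s-1})}_x}$ for every $s$. *)

From HB Require Import structures.
From mathcomp Require Import all_boot all_order all_algebra.
From mathcomp Require Import all_classical all_reals.
From mathcomp Require Import topology normedtype.
From mathcomp.real_closed Require Import complex.

Set Implicit Arguments.
Unset Strict Implicit.
Unset Printing Implicit Defensive.

Import Order.TTheory GRing.Theory Num.Theory.
Import numFieldNormedType.Exports.
Local Open Scope classical_set_scope.
Local Open Scope ring_scope.

Section Defs.
Context {R : realType} {X : topologicalType}.

Definition ccont_within (D : set X) (f : X -> R[i]) : Prop :=
  {within D, continuous (fun x => complex.Re (f x))} /\
  {within D, continuous (fun x => complex.Im (f x))}.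

Definition homeomorphism (alpha beta : X -> X) : Prop :=
  [/\ continuous alpha, continuous beta, cancel alpha beta & cancel beta alpha].

Definition full_orbit (alpha beta : X -> X) (x : X) : set X :=
  [set iter n alpha x | n in [set: nat]] `|` [set iter n beta x | n in [set: nat]].

Definition minimal_homeo (alpha beta : X -> X) : Prop :=
  homeomorphism alpha beta /\
  forall x, closure (full_orbit alpha beta x) = [set: X].

(** First return time r_Y(y) = min {n >= 1 : alpha^n y \in Y}
    (set to 0 if there is no return; this never happens under the
    standing hypotheses). *)
Definition return_time (alpha : X -> X) (Y : set X) (y : X) : nat :=
  let P : pred nat := fun n => (0 < n)%N && `[< Y (iter n alpha y) >] in
  match pselect (exists n, P n) with
  | left h => ex_minn h
  | right _ => 0%N
  end.

(** Hermitian line bundle over X, presented by local trivializations: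
    an open cover (U a)_{a : A} and unitary transition functions g a b,
    continuous on U a ∩ U b, satisfying the cocycle identities.
    Convention: on U a ∩ U b the local unit frames satisfy
    e_b(x) = g a b x * e_a(x). *)
Definition hermitian_line_bundle (A : Type) (U : A -> set X)
    (g : A -> A -> X -> R[i]) : Prop :=
  (forall a, open (U a)) /\
  (forall x, exists a, U a x) /\
  (forall a b, ccont_within (U a `&` U b) (g a b)) /\
  (forall a b x, U a x -> U b x -> `|g a b x| = 1) /\
  (forall a x, U a x -> g a a x = 1) /\
  (forall a b c x, U a x -> U b x -> U c x -> g a b x * g b c x = g a c x).

(** A frame choice is a sequence of chart indices c : nat -> A; it is valid
    at x up to length n if alpha^l x \in U (c l) for l < n.  It gives the
    local frame e^{(m)}_c(x) = e_{c(m-1)}(alpha^{m-1} x) ⊗ ... ⊗ e_{c 0}(x)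
    of V^{(m)}_x for every m <= n, hence a frame of D^{(n)}_x. *)
Definition valid_frame (A : Type) (U : A -> set X) (alpha : X -> X)
    (n : nat) (c : nat -> A) (x : X) : Prop :=
  forall l, (l < n)%N -> U (c l) (iter l alpha x).

(** e^{(m)}_{c'}(x) = trans_factor c c' x m * e^{(m)}_c(x). *)
Definition trans_factor (A : Type) (g : A -> A -> X -> R[i]) (alpha : X -> X)
    (c c' : nat -> A) (x : X) (m : nat) : R[i] :=
  \prod_(l < m) g (c l) (c' l) (iter l alpha x).

(** Entry (i,j) of a square matrix, indexed by naturals (0 outside range). *)
Definition mxn (n : nat) (M : 'M[R[i]]_n) (i j : nat) : R[i] :=
  match insub i, insub j with
  | Some i', Some j' => M i' j'
  | _, _ => 0
  end.

(** A section of End(D^{(n)}) over a set Z is described by its matrices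
    S c x in every local frame c (entry (i,j) = coefficient of
    ς(x) e^{(j)}_c(x) along e^{(i)}_c(x)); only the values at x \in Z
    for frames c valid at x are meaningful. *)
Definition end_section (A : Type) (U : A -> set X) (g : A -> A -> X -> R[i])
    (alpha : X -> X) (n : nat) (Z : set X)
    (S : (nat -> A) -> X -> 'M[R[i]]_n) : Prop :=
  (forall c c' x, Z x -> valid_frame U alpha n c x -> valid_frame U alpha n c' x ->
     forall i j : 'I_n,
       S c' x i j = trans_factor g alpha c c' x j / trans_factor g alpha c c' x i
                    * S c x i j) /\
  (forall c (i j : 'I_n),
     ccont_within (Z `&` valid_frame U alpha n c) (fun x => S c x i j)).


Definition ccontinuous (f : X -> R[i]) : Prop :=
  continuous (fun x => complex.Re (f x)) /\ continuous (fun x => complex.Im (f x)).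

Definition Ysub (alpha : X -> X) (Y : set X) (n : nat) : set X :=
  Y `&` [set y | return_time alpha Y y = n].

(** R_s = r_{t_1} + ... + r_{t_s} (with the sequence t 0-indexed). *)
Definition partial_sum (K : nat) (r : 'I_K -> nat) (t : seq 'I_K) (s : nat) : nat :=
  (\sum_(u <- take s t) r u)%N.

(** The s-th component
    V^{(R_{s-1})}_x ⊕ ... ⊕ V^{(R_s - 1)}_x of D^{(r_k)}_x is identified with
    D^{(r_{t_s})}_{alpha^{R_{s-1}} x} ⊗ V^{(R_{s-1})}_x via
    e^{(R_{s-1}+l)}_c(x) = e^{(l)}_{c(R_{s-1} + .)}(alpha^{R_{s-1}} x) ⊗ e^{(R_{s-1})}_c(x). *)
Definition boundary_decomposition_property (A : Type) (U : A -> set X)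
    (alpha : X -> X) (Y : set X) (K : nat) (r : 'I_K -> nat)
    (sig : forall k : 'I_K, (nat -> A) -> X -> 'M[R[i]]_(r k)) : Prop :=
  forall (k : 'I_K) (x : X) (t : seq 'I_K),
    closure (Ysub alpha Y (r k)) x -> ~ Ysub alpha Y (r k) x ->
    all (fun u : 'I_K => (u < k)%N) t ->
    (\sum_(u <- t) r u)%N = r k ->
    (forall s, (s < size t)%N ->
       Ysub alpha Y (r (nth k t s)) (iter (partial_sum r t s) alpha x)) ->
    forall s, (s < size t)%N ->
    forall c, valid_frame U alpha (r k) c x ->
    forall i j : nat, (i < r k)%N ->
      (partial_sum r t s <= j < partial_sum r t s.+1)%N ->
      mxn (sig k c x) i j =
      if (partial_sum r t s <= i < partial_sum r t s.+1)%N then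
        mxn (sig (nth k t s) (fun l => c (partial_sum r t s + l)%N)
                 (iter (partial_sum r t s) alpha x))
            (i - partial_sum r t s) (j - partial_sum r t s)
      else 0.

Definition diagonal_property (A : Type) (U : A -> set X)
    (alpha : X -> X) (Y : set X) (K : nat) (r : 'I_K -> nat)
    (sig : forall k : 'I_K, (nat -> A) -> X -> 'M[R[i]]_(r k)) : Prop :=
  forall (k : 'I_K) (x : X) c,
    closure (Ysub alpha Y (r k)) x -> valid_frame U alpha (r k) c x ->
    forall i j : 'I_(r k), i != j -> sig k c x i j = 0.

Definition in_pi_CX (A : Type) (U : A -> set X)
    (alpha : X -> X) (Y : set X) (K : nat) (r : 'I_K -> nat)
    (sig : forall k : 'I_K, (nat -> A) -> X -> 'M[R[i]]_(r k)) : Prop :=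
  exists f : X -> R[i], ccontinuous f /\
    forall (k : 'I_K) (x : X) c,
      closure (Ysub alpha Y (r k)) x -> valid_frame U alpha (r k) c x ->
      sig k c x = \matrix_(i, j) (if i == j then f (iter i alpha x) else 0).

End Defs.

From HB Require Import structures.
From mathcomp Require Import all_boot all_order all_algebra.
From mathcomp Require Import all_classical all_reals.
From mathcomp Require Import topology normedtype.
From mathcomp.real_closed Require Import complex.
From mathcomp Require Import zify.

(** If [sig = pi f], both properties are read off the diagonal matrices of
    [pi f], whose [i]-th entry at [x] is [f (alpha^i x)].

    Conversely, minimality and compactness make every orbit visit [Y] in the
    future and in the past, so every [x] is uniquely [alpha^i y] with [y] in
    [Y] and [i < r_Y(y)].  Put [f x] := the [i]-th diagonal entry of
    [sig_k(y)], where [r_k = r_Y(y)]; diagonal entries do not depend on the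
    local frame.  A point [y] of [closure Y_k] outside [Y_k] still returns to
    [Y] at time [r_k], and this return splits into first returns of lengths
    [r_(t_1), ..., r_(t_m)] with every [t_s < k]; the boundary decomposition
    property identifies the diagonal of [sig_k(y)] with the diagonals of the
    [sig_(t_s)] at these points, so [sig_k = pi_k f] on all of [closure Y_k].
    Hence [f] is continuous on each of the finitely many closed sets
    [alpha^i (closure Y_k)], [i < r_k], and these cover [X]. *)

Set Implicit Arguments.
Unset Strict Implicit.
Unset Printing Implicit Defensive.

Import Order.TTheory GRing.Theory Num.Theory.
Import numFieldNormedType.Exports.
Local Open Scope classical_set_scope.
Local Open Scope ring_scope.

Lemma iterK (T : Type) (f h : T -> T) : cancel f h ->
  forall n, cancel (iter n f) (iter n h).
Proof. by move=> fK; elim=> [|n IH] x //; rewrite iterSr iterS fK IH. Qed.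

Lemma iterK_leq (T : Type) (f h : T -> T) : cancel f h ->
  forall m n x, (n <= m)%N -> iter n h (iter m f x) = iter (m - n) f x.
Proof. by move=> fK m n x nm; rewrite -{1}(subnKC nm) iterD iterK. Qed.

Lemma continuous_iter (X : topologicalType) (f : X -> X) :
  continuous f -> forall n, continuous (iter n f).
Proof.
move=> cf; elim=> [|n IH] x /=; first exact: cvg_id.
exact: continuous_comp (IH x) (cf _).
Qed.

Lemma compact_uniform_visit (X : topologicalType) (f h : X -> X) (W : set X) :
  compact [set: X] -> continuous f -> continuous h -> open W ->
  (forall x, exists n, W (iter n f x) \/ W (iter n h x)) ->
  exists N, forall x, exists2 n, (n <= N)%N & W (iter n f x) \/ W (iter n h x).
Proof.
move=> cX cf ch oW visit.
pose P N x := exists2 n, (n <= N)%N & W (iter n f x) \/ W (iter n h x).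
have [] := (compact_near_coveringP _).1 cX nat \oo P _.
- move=> x _; have [n visit_n] := visit x.
  have preW (k : X -> X) : continuous k -> W (k x) -> nbhs x (k @^-1` W).
    by move=> ck Wkx; apply: ck; apply: open_nbhs_nbhs.
  exists (iter n f @^-1` W `|` iter n h @^-1` W, [set N | (n <= N)%N]).
    split => /=; last by exists n.
    case: visit_n => Wn.
      by have := preW _ (continuous_iter (n := n) cf) Wn; apply: filterS => z; left.
    by have := preW _ (continuous_iter (n := n) ch) Wn; apply: filterS => z; right.
  by move=> [z N] /= [Wz nN]; exists n.
- by move=> N _ PN; exists N => x; exact: PN N (leqnn N) x I.
Qed.

Section ReturnTime.
Variables (X : topologicalType) (alpha : X -> X) (Y : set X).
Local Notation rt := (return_time alpha Y).

Lemma return_timeP y :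
  (rt y = 0%N /\ forall n, (0 < n)%N -> ~ Y (iter n alpha y)) \/
  [/\ (0 < rt y)%N, Y (iter (rt y) alpha y) &
      forall m, (0 < m < rt y)%N -> ~ Y (iter m alpha y)].
Proof.
rewrite /return_time; case: pselect => [ret|noret].
  right; case: ex_minnP => m /andP[m_gt0 /asboolP Ym] m_min; split => //.
  move=> k /andP[k_gt0 km] Yk.
  by have := m_min k (introT andP (conj k_gt0 (asboolT Yk))); rewrite leqNgt km.
left; split => // n n_gt0 Yn; apply: noret; exists n.
by rewrite n_gt0; apply/asboolP.
Qed.

Lemma Ysub_return n y : Ysub alpha Y n y -> Y y /\ Y (iter n alpha y).
Proof.
move=> [Yy /= rt_y]; split => //; case: n rt_y => [|n] rt_y //.
by case: (return_timeP y); rewrite rt_y => -[].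
Qed.

Lemma closure_Ysub_return n y : continuous alpha -> closed Y ->
  closure (Ysub alpha Y n) y -> Y y /\ Y (iter n alpha y).
Proof.
move=> ca Yc cl; have C_closed : closed (Y `&` iter n alpha @^-1` Y).
  apply: closedI => //; apply: preimage_closed => // z _; exact: continuous_iter.
have : closure (Y `&` iter n alpha @^-1` Y) y.
  by apply: closureS cl => z; exact: Ysub_return.
by rewrite -(closure_id _).1.
Qed.

End ReturnTime.

Section Recurrence.
Variables (X : topologicalType) (alpha beta : X -> X) (Y : set X).
Hypotheses (X_compact : compact [set: X]) (alpha_min : minimal_homeo alpha beta).
Hypothesis Y_int : Y° !=set0.
Local Notation rt := (return_time alpha Y).

Let uniform_visit :
  exists N, forall x, exists2 n, (n <= N)%N & Y (iter n alpha x) \/ Y (iter n beta x).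
Proof.
case: alpha_min => -[ca cb _ _] dense.
have [N visitN] : exists N, forall x, exists2 n, (n <= N)%N &
    Y° (iter n alpha x) \/ Y° (iter n beta x).
  apply: compact_uniform_visit => //; first exact: open_interior.
  case: Y_int => w Yw x.
  have : closure (full_orbit alpha beta x) w by rewrite dense.
  case/(_ Y°); first by apply: open_nbhs_nbhs; split => //; exact: open_interior.
  by move=> z [[[n _ <-]|[n _ <-]] Wz]; exists n; [left|right].
exists N => x; have [n nN visit_n] := visitN x.
by exists n => //; case: visit_n => /interior_subset; [left|right].
Qed.

Lemma visit_future x : exists2 n, (0 < n)%N & Y (iter n alpha x).
Proof.
case: alpha_min => -[_ _ ab _] _.
have [N visitN] := uniform_visit; have [n nN [Yn|Yn]] := visitN (iter N.+1 alpha x).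
  by exists (n + N.+1)%N; [rewrite addnS | rewrite iterD].
by exists (N.+1 - n)%N; [rewrite subn_gt0 | rewrite -(iterK_leq ab) // leqW].
Qed.

Lemma visit_past x : exists m, Y (iter m beta x).
Proof.
case: alpha_min => -[_ _ _ ba] _.
have [N visitN] := uniform_visit; have [n nN [Yn|Yn]] := visitN (iter N beta x).
  by exists (N - n)%N; rewrite -(iterK_leq ba).
by exists (n + N)%N; rewrite iterD.
Qed.

Lemma first_return_coord x :
  exists i y, [/\ Y y, (i < rt y)%N & iter i alpha y = x].
Proof.
case: alpha_min => -[_ _ ab ba] _.
have [m0 Ym0] := visit_past x.
have past : exists m, `[< Y (iter m beta x) >] by exists m0; apply/asboolP.
case: (ex_minnP past) => m /asboolP Ym m_min.
exists m, (iter m beta x); split => //; last exact: iterK.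
case: (return_timeP alpha Y (iter m beta x)) => [[_ noret]|[rt_gt0 Yrt _]].
  by have [n n_gt0 Yn] := visit_future (iter m beta x); case: (noret n n_gt0).
rewrite ltnNge; apply/negP => rt_le.
move: Yrt; rewrite (iterK_leq ba) // => /asboolT/m_min; lia.
Qed.

Lemma first_return_coord_uniq i1 y1 i2 y2 : Y y1 -> Y y2 ->
  (i1 < rt y1)%N -> (i2 < rt y2)%N ->
  iter i1 alpha y1 = iter i2 alpha y2 -> i1 = i2 /\ y1 = y2.
Proof.
case: alpha_min => -[_ _ ab _] _.
wlog i12 : i1 y1 i2 y2 / (i1 <= i2)%N.
  move=> wlog_le Y1 Y2 lt1 lt2 e; have [le|lt] := leqP i1 i2; first exact: wlog_le.
  by have [-> ->] := wlog_le i2 y2 i1 y1 (ltnW lt) Y2 Y1 lt2 lt1 (esym e).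
move=> Y1 _ _ lt2 e.
have ey1 : y1 = iter (i2 - i1) alpha y2 by rewrite -(iterK_leq ab) // -e iterK.
have [d0|d_gt0] := posnP (i2 - i1).
  by split; [lia | rewrite ey1 d0].
case: (return_timeP alpha Y y2) => [[rt0 _]|[_ _ rt_min]]; first by rewrite rt0 in lt2.
by exfalso; apply: (rt_min (i2 - i1)%N); [lia | rewrite -ey1].
Qed.

End Recurrence.

Section PartialSums.
Variables (K : nat) (r : 'I_K -> nat).

Lemma partial_sum0 t : partial_sum r t 0 = 0%N.
Proof. by rewrite /partial_sum take0 big_nil. Qed.

Lemma partial_sum_cons u t s :
  partial_sum r (u :: t) s.+1 = (r u + partial_sum r t s)%N.
Proof. by rewrite /partial_sum /= big_cons. Qed.

Lemma partial_sumS d t s : (s < size t)%N ->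
  partial_sum r t s.+1 = (partial_sum r t s + r (nth d t s))%N.
Proof.
elim: t s => [|u t IH] [|s] //= s_lt.
  by rewrite partial_sum_cons !partial_sum0 addn0.
by rewrite !partial_sum_cons IH // addnA.
Qed.

Lemma partial_sum_le t s : (partial_sum r t s <= \sum_(u <- t) r u)%N.
Proof.
elim: t s => [|u t IH] [|s]; rewrite ?partial_sum0 //.
by rewrite partial_sum_cons big_cons leq_add2l.
Qed.

Lemma partial_sum_block t i : (i < \sum_(u <- t) r u)%N ->
  exists2 s, (s < size t)%N & (partial_sum r t s <= i < partial_sum r t s.+1)%N.
Proof.
elim: t i => [|u t IH] i; first by rewrite big_nil.
rewrite big_cons => i_lt; have [i_lt_u|u_le_i] := ltnP i (r u).
  by exists 0%N; rewrite // partial_sum_cons !partial_sum0 addn0.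
have [|s s_lt block_s] := IH (i - r u)%N; first lia.
by exists s.+1; rewrite // !partial_sum_cons; lia.
Qed.

Lemma leq_sum_mem t u : u \in t -> (r u <= \sum_(v <- t) r v)%N.
Proof. by elim: t => [|v t IH] //; rewrite inE big_cons => /orP[/eqP ->|/IH]; lia. Qed.

Lemma ltn_sum_mem t u : u \in t -> all (fun v => 0 < r v)%N t ->
  (r u < \sum_(v <- t) r v)%N \/ t = [:: u].
Proof.
case: t => [|v [|w t]] //; first by rewrite inE => /eqP ->; right.
rewrite inE big_cons => /orP[/eqP ->|u_in] /and3P[v_gt0 w_gt0 _]; left.
  by rewrite big_cons; lia.
by have := leq_sum_mem u_in; lia.
Qed.

End PartialSums.

Section ReturnDecomposition.
Variables (X : topologicalType) (alpha : X -> X) (Y : set X).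
Variables (K : nat) (r : 'I_K -> nat).
Hypothesis r_vals : forall n : nat,
  (exists2 y, Y y & return_time alpha Y y = n) <-> (exists k : 'I_K, r k = n).
Local Notation rt := (return_time alpha Y).

Lemma return_decomposition n y : Y y -> Y (iter n alpha y) ->
  exists t : seq 'I_K, [/\ (\sum_(u <- t) r u)%N = n,
    all (fun u => 0 < r u)%N t &
    forall d s, (s < size t)%N ->
      Ysub alpha Y (r (nth d t s)) (iter (partial_sum r t s) alpha y)].
Proof.
elim/ltn_ind: n y => n IH y Yy Yn.
have [n0|n_gt0] := posnP n; first by exists [::]; rewrite n0 big_nil.
case: (return_timeP alpha Y y) => [[_ noret]|[rt_gt0 Yrt rt_min]].
  by case: (noret n n_gt0).
have rt_le : (rt y <= n)%N.
  by rewrite leqNgt; apply/negP => n_lt; apply: (rt_min n) => //; rewrite n_gt0.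
have [k rk] := (r_vals (rt y)).1 (ex_intro2 _ _ y Yy erefl).
have [||t [sum_t pos_t Yt]] := IH (n - rt y)%N _ (iter (rt y) alpha y) Yrt.
- lia.
- by rewrite -iterD subnK.
exists (k :: t); split.
- by rewrite big_cons sum_t rk subnKC.
- by rewrite /= rk rt_gt0.
- move=> d [|s] /= s_lt; first by rewrite partial_sum0 /Ysub rk.
  by rewrite partial_sum_cons addnC iterD rk; apply: Yt.
Qed.

End ReturnDecomposition.

Lemma mxnE (R : realType) n (M : 'M[R[i]]_n) i j (i_lt : (i < n)%N) (j_lt : (j < n)%N) :
  mxn M i j = M (Ordinal i_lt) (Ordinal j_lt).
Proof.
by rewrite /mxn (insubT (fun i => i < n)%N i_lt) (insubT (fun i => i < n)%N j_lt).
Qed.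

Lemma mxn_diag (R : realType) n (F : nat -> R[i]) i j : (j < n)%N ->
  mxn (\matrix_(i0, j0 < n) (if i0 == j0 then F i0 else 0)) i j =
  if i == j then F i else 0.
Proof.
move=> j_lt; have [i_lt|i_ge] := ltnP i n; first by rewrite (mxnE _ i_lt j_lt) mxE.
by rewrite /mxn insubF ?ltnNge ?i_ge //; case: eqP => // ij; lia.
Qed.

Lemma continuous_closed_cover_seq (T V : topologicalType) (I : eqType)
    (P : I -> set T) (h : T -> V) (s : seq I) :
  (forall p, p \in s -> closed (P p)) ->
  (forall p, p \in s -> {within P p, continuous h}) ->
  closed [set z | exists2 p, p \in s & P p z] /\
  {within [set z | exists2 p, p \in s & P p z], continuous h}.
Proof.
elim: s => [|q s IH] P_closed h_cont.
  have -> : [set z | exists2 p, p \in [::] & P p z] = set0.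
    by apply/seteqP; split => z // [].
  by split; [exact: closed0 | exact: continuous_subspace0].
have -> : [set z | exists2 p, p \in q :: s & P p z] =
    P q `|` [set z | exists2 p, p \in s & P p z].
  apply/seteqP; split => z /=.
    by move=> [p]; rewrite inE => /orP[/eqP -> | ps] Pz; [left | right; exists p].
  case => [Pz|[p ps Pz]]; first by exists q; rewrite ?mem_head.
  by exists p; rewrite // inE ps orbT.
have sub p : p \in s -> p \in q :: s by move=> ps; rewrite inE ps orbT.
have [s_closed s_cont] := IH (fun p ps => P_closed p (sub p ps))
  (fun p ps => h_cont p (sub p ps)).
split; first exact: closedU (P_closed q (mem_head q s)) s_closed.
exact: withinU_continuous (P_closed q (mem_head q s)) s_closed
  (h_cont q (mem_head q s)) s_cont.
Qed.

Section Frames.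
Variables (R : realType) (X : topologicalType) (alpha : X -> X).
Variables (A : Type) (U : A -> set X) (g : A -> A -> X -> R[i]).
Hypothesis V_bundle : hermitian_line_bundle U g.

Lemma valid_frame_exists n y : exists c, valid_frame U alpha n c y.
Proof.
case: V_bundle => _ [cover _].
by have [c hc] := choice (fun l => cover (iter l alpha y)); exists c => l _.
Qed.

Lemma valid_frame_shift n m p c y : (m + p <= n)%N ->
  valid_frame U alpha n c y ->
  valid_frame U alpha p (fun l => c (m + l)%N) (iter m alpha y).
Proof. by move=> mp_le valid_y l l_lt; rewrite -iterD addnC; apply: valid_y; lia. Qed.

Lemma valid_frame_nbhs n c y : continuous alpha ->
  valid_frame U alpha n c y -> nbhs y (valid_frame U alpha n c).
Proof.
move=> ca; elim: n => [|n IH] valid_y.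
  by apply: filterS filterT => z _ l; rewrite ltn0.
have /IH valid_near : valid_frame U alpha n c y by move=> l l_lt; apply: valid_y; lia.
have U_near : nbhs y (iter n alpha @^-1` U (c n)).
  apply: (continuous_iter (n := n) ca); apply: open_nbhs_nbhs; split.
    by case: V_bundle.
  exact: valid_y.
apply: filterS (filterI valid_near U_near) => z [valid_z Uz] l l_lt.
by case: (ltngtP l n) => [/valid_z | | ->] //; lia.
Qed.

Lemma trans_factor_neq0 n c c' y :
  valid_frame U alpha n c y -> valid_frame U alpha n c' y ->
  forall m, (m <= n)%N -> trans_factor g alpha c c' y m != 0.
Proof.
case: V_bundle => _ [_ [_ [unitary _]]] valid_c valid_c' m m_le.
apply/prodf_neq0 => l _; have l_lt : (l < n)%N := leq_trans (ltn_ord l) m_le.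
by rewrite -normr_eq0 unitary ?oner_eq0 //; [exact: valid_c | exact: valid_c'].
Qed.

End Frames.

Section Characterization.
Variables (R : realType) (X : topologicalType) (alpha beta : X -> X).
Hypotheses (X_compact : compact [set: X]) (alpha_min : minimal_homeo alpha beta).
Variables (A : Type) (U : A -> set X) (g : A -> A -> X -> R[i]).
Hypothesis V_bundle : hermitian_line_bundle U g.
Variable Y : set X.
Hypotheses (Y_closed : closed Y) (Y_int : Y° !=set0).
Variables (K : nat) (r : 'I_K -> nat).
Hypothesis r_incr : forall k l : 'I_K, (k < l)%N -> (r k < r l)%N.
Hypothesis r_vals : forall n : nat,
  (exists2 y, Y y & return_time alpha Y y = n) <-> (exists k : 'I_K, r k = n).
Variable sig : forall k : 'I_K, (nat -> A) -> X -> 'M[R[i]]_(r k).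
Hypothesis sig_sect : forall k : 'I_K,
  end_section U g alpha (closure (Ysub alpha Y (r k))) (sig k).

Let alpha_cont : continuous alpha. Proof. by case: alpha_min => -[]. Qed.
Let beta_cont : continuous beta. Proof. by case: alpha_min => -[]. Qed.
Let alphaK : cancel alpha beta. Proof. by case: alpha_min => -[]. Qed.
Let betaK : cancel beta alpha. Proof. by case: alpha_min => -[]. Qed.

Lemma in_pi_CX_boundary_decomposition :
  in_pi_CX U alpha Y sig -> boundary_decomposition_property U alpha Y sig.
Proof.
move=> [f [_ sig_f]] k x t cl _ _ sum_t Yt s s_lt c valid_c i j i_lt block_j.
have R1 := partial_sumS r k s_lt.
have block_le : (partial_sum r t s + r (nth k t s) <= r k)%N.
  by rewrite -R1 -sum_t partial_sum_le.
set R0 := partial_sum r t s in R1 block_le block_j *.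
rewrite sig_f // (mxn_diag (fun n => f (iter n alpha x))); last lia.
have [block_i|not_block_i] := boolP (R0 <= i < partial_sum r t s.+1)%N; last first.
  by have [ij|//] := eqVneq i j; rewrite ij block_j in not_block_i.
rewrite (sig_f _ _ _ (subset_closure (Yt s s_lt)) (valid_frame_shift block_le valid_c)).
rewrite (mxn_diag (fun n => f (iter n alpha (iter R0 alpha x)))); last lia.
by rewrite eqn_sub2rE -?iterD ?subnK //; lia.
Qed.

Lemma in_pi_CX_diagonal : in_pi_CX U alpha Y sig -> diagonal_property U alpha Y sig.
Proof.
by move=> [f [_ sig_f]] k x c cl valid_c i j ij; rewrite sig_f // mxE (negbTE ij).
Qed.

Lemma r_ltn k l : (r k < r l)%N = (k < l)%N.
Proof.
case: (ltngtP k l) => [kl|lk|kl]; first by rewrite r_incr.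
  by apply/negbTE; rewrite -leqNgt ltnW ?r_incr.
by rewrite (val_inj kl) !ltnn.
Qed.

Lemma r_inj : injective r.
Proof.
move=> k l e; apply: ord_inj; have := r_ltn k l; have := r_ltn l k.
by rewrite e ltnn; case: ltngtP.
Qed.

Definition diag_entry k c y i := mxn (sig k c y) i i.

Lemma diag_entry_frame k c c' y i : closure (Ysub alpha Y (r k)) y ->
  valid_frame U alpha (r k) c y -> valid_frame U alpha (r k) c' y ->
  (i < r k)%N -> diag_entry k c y i = diag_entry k c' y i.
Proof.
move=> cl valid_c valid_c' i_lt; rewrite /diag_entry !(mxnE _ i_lt i_lt).
rewrite ((sig_sect k).1 c c' y cl valid_c valid_c') divff ?mul1r //.
exact: (trans_factor_neq0 V_bundle valid_c valid_c' (ltnW i_lt)).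
Qed.

Lemma closure_Ysub_decomposition k y :
  closure (Ysub alpha Y (r k)) y -> ~ Ysub alpha Y (r k) y ->
  exists t : seq 'I_K, [/\ all (fun u : 'I_K => (u < k)%N) t,
    (\sum_(u <- t) r u)%N = r k &
    forall d s, (s < size t)%N ->
      Ysub alpha Y (r (nth d t s)) (iter (partial_sum r t s) alpha y)].
Proof.
move=> cl not_Ysub; have [Yy Yr] := closure_Ysub_return alpha_cont Y_closed cl.
have [t [sum_t pos_t Yt]] := return_decomposition r_vals Yy Yr.
exists t; split => //; apply/allP => u u_in; rewrite -r_ltn -sum_t.
case: (ltn_sum_mem u_in pos_t) => // t_u; case: not_Ysub.
move: sum_t (Yt u 0%N); rewrite t_u big_seq1 partial_sum0 => <-; exact.
Qed.

Section Converse.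
Hypothesis bdp : boundary_decomposition_property U alpha Y sig.
Hypothesis diag : diagonal_property U alpha Y sig.

Lemma diag_entry_boundary k c y i :
  closure (Ysub alpha Y (r k)) y -> ~ Ysub alpha Y (r k) y ->
  valid_frame U alpha (r k) c y -> (i < r k)%N ->
  exists k' i' y' c', [/\ Ysub alpha Y (r k') y', (i' < r k')%N,
    iter i' alpha y' = iter i alpha y, valid_frame U alpha (r k') c' y' &
    diag_entry k c y i = diag_entry k' c' y' i'].
Proof.
move=> cl not_Ysub valid_c i_lt.
have [t [t_lt sum_t Yt]] := closure_Ysub_decomposition cl not_Ysub.
have [s s_lt block_i] : exists2 s, (s < size t)%N &
    (partial_sum r t s <= i < partial_sum r t s.+1)%N.
  by apply: partial_sum_block; rewrite sum_t.
have R1 := partial_sumS r k s_lt.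
have block_le : (partial_sum r t s + r (nth k t s) <= r k)%N.
  by rewrite -R1 -sum_t partial_sum_le.
have := bdp cl not_Ysub t_lt sum_t (Yt k) s_lt valid_c i_lt block_i.
rewrite block_i; set R0 := partial_sum r t s in R1 block_le block_i * => entry_i.
exists (nth k t s), (i - R0)%N, (iter R0 alpha y), (fun l => c (R0 + l)%N); split.
- exact: Yt.
- lia.
- by rewrite -iterD subnK //; case/andP: block_i.
- exact: valid_frame_shift block_le valid_c.
- exact: entry_i.
Qed.

(* Points of [closure Y_k] are admitted too, so that [sig_diag_fun] holds on
   the whole closure. *)
Definition diag_values x : set R[i] := [set v | exists k i y c,
  [/\ closure (Ysub alpha Y (r k)) y, (i < r k)%N, iter i alpha y = x,
      valid_frame U alpha (r k) c y & v = diag_entry k c y i]].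

Lemma diag_values_genuine x v : diag_values x v -> exists k i y c,
  [/\ Ysub alpha Y (r k) y, (i < r k)%N, iter i alpha y = x,
      valid_frame U alpha (r k) c y & v = diag_entry k c y i].
Proof.
move=> [k [i [y [c [cl i_lt <- valid_c ->]]]]].
have [Yk|not_Yk] := pselect (Ysub alpha Y (r k) y); first by exists k, i, y, c.
exact: diag_entry_boundary.
Qed.

Lemma diag_values_uniq x v1 v2 : diag_values x v1 -> diag_values x v2 -> v1 = v2.
Proof.
move=> /diag_values_genuine [k1 [i1 [y1 [c1 [[Y1 rt1] i1_lt <- valid1 ->]]]]].
move=> /diag_values_genuine [k2 [i2 [y2 [c2 [[Y2 rt2] i2_lt e valid2 ->]]]]].
rewrite /= in rt1 rt2.
have lt1 : (i1 < return_time alpha Y y1)%N by rewrite rt1.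
have lt2 : (i2 < return_time alpha Y y2)%N by rewrite rt2.
have [ei ey] := first_return_coord_uniq alpha_min Y1 Y2 lt1 lt2 (esym e).
have k12 : k1 = k2 by apply: r_inj; rewrite -rt1 -rt2 ey.
subst i2 y2 k2; apply: diag_entry_frame => //; exact: subset_closure.
Qed.

Definition diag_fun x := xget 0 (diag_values x).

Lemma diag_funE x v : diag_values x v -> diag_fun x = v.
Proof. by move=> xv; apply: diag_values_uniq (xgetPex 0 (ex_intro _ v xv)) xv. Qed.

Lemma diag_fun_iter k c y i : closure (Ysub alpha Y (r k)) y ->
  valid_frame U alpha (r k) c y -> (i < r k)%N ->
  diag_fun (iter i alpha y) = diag_entry k c y i.
Proof. by move=> cl valid_c i_lt; apply: diag_funE; exists k, i, y, c. Qed.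

Lemma sig_diag_fun k x c : closure (Ysub alpha Y (r k)) x ->
  valid_frame U alpha (r k) c x ->
  sig k c x = \matrix_(i, j) (if i == j then diag_fun (iter i alpha x) else 0).
Proof.
move=> cl valid_c; apply/matrixP => i j; rewrite mxE; case: eqP => [<-|/eqP ij].
  rewrite (diag_fun_iter cl valid_c (ltn_ord i)) /diag_entry mxnE.
  by congr (sig k c x _ _); apply: val_inj.
exact: diag.
Qed.

Lemma orbit_pieces_cover z :
  exists k i, (i < r k)%N /\ closure (Ysub alpha Y (r k)) (iter i beta z).
Proof.
have [i [y [Yy i_lt <-]]] := first_return_coord X_compact alpha_min Y_int z.
have [k rk] := (r_vals (return_time alpha Y y)).1 (ex_intro2 _ _ y Yy erefl).
exists k, i; rewrite rk (iterK alphaK); split => //.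
by apply: subset_closure; split.
Qed.

Section RealProjection.
Variable proj : R[i] -> R.
Hypothesis proj_sig_cont : forall k c (i : 'I_(r k)),
  {within closure (Ysub alpha Y (r k)) `&` valid_frame U alpha (r k) c,
    continuous (fun y => proj (sig k c y i i))}.

Lemma diag_fun_continuous_piece k i : (i < r k)%N ->
  {within [set z | closure (Ysub alpha Y (r k)) (iter i beta z)],
    continuous (fun z => proj (diag_fun z))}.
Proof.
move=> i_lt; apply/subspace_continuousP => z0 piece_z0.
have [c valid_c] := valid_frame_exists alpha V_bundle (r k) (iter i beta z0).
pose F y := proj (sig k c y (Ordinal i_lt) (Ordinal i_lt)).
have diag_F z : closure (Ysub alpha Y (r k)) (iter i beta z) ->
    valid_frame U alpha (r k) c (iter i beta z) -> proj (diag_fun z) = F (iter i beta z).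
  move=> cl valid_z; rewrite -{1}(iterK betaK i z) (diag_fun_iter cl valid_z i_lt).
  by rewrite /diag_entry (mxnE _ i_lt i_lt).
have F_cont := (subspace_continuousP _ _).1 (@proj_sig_cont k c (Ordinal i_lt))
  (iter i beta z0) (conj piece_z0 valid_c).
rewrite /from_subspace /= diag_F // => B /F_cont F_near.
have iter_near := @continuous_iter _ _ beta_cont i z0.
have near_F : nbhs z0 (iter i beta @^-1` [set y |
    (closure (Ysub alpha Y (r k)) `&` valid_frame U alpha (r k) c) y -> B (F y)]).
  exact: (iter_near _ F_near).
have near_valid : nbhs z0 (iter i beta @^-1` valid_frame U alpha (r k) c).
  exact: (iter_near _ (valid_frame_nbhs V_bundle alpha_cont valid_c)).
apply: filterS (filterI near_F near_valid) => z [F_z valid_z] piece_z /=.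
by rewrite diag_F //; apply: F_z.
Qed.

Lemma diag_fun_continuous_proj : continuous (fun z => proj (diag_fun z)).
Proof.
pose pieces := [seq (k, i) | k <- enum 'I_K, i <- iota 0 (\sum_(k < K) r k)].
pose P (p : 'I_K * nat) := if (p.2 < r p.1)%N then
  [set z | closure (Ysub alpha Y (r p.1)) (iter p.2 beta z)] else set0.
have P_closed p : p \in pieces -> closed (P p).
  move=> _; rewrite /P; case: ifP => _; last exact: closed0.
  apply: preimage_closed; last exact: closed_closure.
  by move=> z _; exact: continuous_iter.
have P_cont p : p \in pieces -> {within P p, continuous (fun z => proj (diag_fun z))}.
  move=> _; rewrite /P; case: ifP => i_lt; last exact: continuous_subspace0.
  exact: diag_fun_continuous_piece.
have [_ cont] := continuous_closed_cover_seq P_closed P_cont.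
apply/continuous_subspace_setT.
suff <- : [set z | exists2 p, p \in pieces & P p z] = [set: X] by [].
apply/seteqP; split => z // _.
have [k [i [i_lt piece_z]]] := orbit_pieces_cover z.
exists (k, i); last by rewrite /P /= i_lt.
apply: allpairs_f; first by rewrite mem_enum.
rewrite mem_iota /= add0n; apply: leq_trans i_lt _.
by rewrite (bigD1 k) //= leq_addr.
Qed.

End RealProjection.

Lemma diag_fun_ccontinuous : ccontinuous diag_fun.
Proof.
split; apply: diag_fun_continuous_proj => k c i.
  exact: ((sig_sect k).2 c i i).1.
exact: ((sig_sect k).2 c i i).2.
Qed.

Lemma boundary_decomposition_diagonal_in_pi_CX : in_pi_CX U alpha Y sig.
Proof.
by exists diag_fun; split; [exact: diag_fun_ccontinuous | exact: sig_diag_fun].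
Qed.

End Converse.

End Characterization.

Unset Implicit Arguments.

Theorem corollary8p4
  (R : realType) (X : metricType R)
  (X_compact : compact [set: X]) (X_infinite : infinite_set [set: X])
  (alpha beta : X -> X) (alpha_min : minimal_homeo alpha beta)
  (A : Type) (U : A -> set X) (g : A -> A -> X -> R[i])
  (V_bundle : hermitian_line_bundle U g)
  (Y : set X) (Y_closed : closed Y) (Y_int : interior Y !=set0)
  (K : nat) (r : 'I_K -> nat)
  (r_incr : forall k l : 'I_K, (k < l)%N -> (r k < r l)%N)
  (r_vals : forall n : nat,
     (exists2 y, Y y & return_time alpha Y y = n) <-> (exists k : 'I_K, r k = n))
  (sig : forall k : 'I_K, (nat -> A) -> X -> 'M[R[i]]_(r k))
  (sig_sect : forall k : 'I_K,
     end_section U g alpha (closure (Ysub alpha Y (r k))) (sig k)) :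
  in_pi_CX U alpha Y sig <->
  boundary_decomposition_property U alpha Y sig /\ diagonal_property U alpha Y sig.
Proof.
split.
  move=> pi_sig; split; first exact: in_pi_CX_boundary_decomposition.
  exact: in_pi_CX_diagonal.
move=> [bdp diag].
exact: (boundary_decomposition_diagonal_in_pi_CX X_compact alpha_min V_bundle
  Y_closed Y_int r_incr r_vals sig_sect bdp diag).
Qed.
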